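(* Let $(S,+)$ be a commutative cancellative semigroup with no identity element such that its difference group $S-S$ carries a multiplication $\cdot$ making $(S-S,+,\cdot)$ an integral domain. Let $j\in\mathbb{N}$, let $R$ be a nonempty finite set of integral polynomials on $(S-S)^j$, let $A$ be a piecewise syndetic subset of $S$, and let $\langle\vec y_n\rangle_{n=1}^\infty$ be a sequence in $S^j$. Then there exist $a\in S$ and a nonempty finite set $H\subseteq\mathbb{N}$ such that $a+f\big(\sum_{n\in H}\vec y_n\big)\in A$ for every $f\in R$.
   Context: The difference group of a commutative cancellative semigroup $S$ is the abelian group $S-S=\{a-b: a,b\in S\}$, where $a-b$ is the element with $(a-b)+b=a$; $S$ is regarded as a subset of $S-S$, and $S^j\subseteq(S-S)^j$ with coordinatewise addition. An integral polynomial on $(S-S)^j$ is a polynomial function $(S-S)^j\to S-S$ in $j$ variables with coefficients in $S-S$ and zero constant term. For $t\in S$ and $A\subseteq S$, $-t+A=\{s\in S: t+s\in A\}$. A set $A\subseteq S$ is piecewise syndetic if there is a finite $G\subseteq S$ such that for every finite $F\subseteq S$ there is $x\in S$ with $F+x\subseteq\bigcup_{t\in G}(-t+A)$. $\mathbb{N}=\{1,2,\dots\}$. *)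

From mathcomp Require Import all_boot all_order all_algebra.
From mathcomp Require Import mpoly.
Set Implicit Arguments. Unset Strict Implicit. Unset Printing Implicit Defensive.
Import GRing.Theory.
Local Open Scope ring_scope.

(* The commutative cancellative semigroup S is represented, as in the paper,
   as a subset of its difference group G = S - S, which carries a ring
   structure making it an integral domain. *)

Definition diff_group_semigroup (G : idomainType) (S : G -> Prop) : Prop :=
  [/\ (forall a b, S a -> S b -> S (a + b)),
      (forall g : G, exists a b, [/\ S a, S b & g = a - b])
    & ~ (exists e, S e /\ forall s, S s -> e + s = s)].

Definition shiftback (G : zmodType) (S A : G -> Prop) (t : G) : G -> Prop :=
  fun s => S s /\ A (t + s).

Definition piecewise_syndetic (G : zmodType) (S A : G -> Prop) : Prop :=
  exists Gs : seq G, (forall t, t \in Gs -> S t) /\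
    forall Fs : seq G, (forall s, s \in Fs -> S s) ->
      exists x, S x /\ forall s, s \in Fs ->
        exists2 t, t \in Gs & shiftback S A t (s + x).

Definition is_integral_polynomial (G : comRingType) (j : nat) (p : {mpoly G[j]}) : Prop :=
  p@_0%MM = 0.

From mathcomp Require Import all_boot all_order all_algebra.
From mathcomp Require Import mpoly.
From mathcomp Require Import boolp.
Import GRing.Theory.
Local Open Scope ring_scope.
Set Implicit Arguments. Unset Strict Implicit. Unset Printing Implicit Defensive.

(* A polynomial map with zero constant term on G^j has finite degree in the
   sense of iterated differences and vanishes at 0.  For a finite family P of
   such maps between abelian groups V and G we prove an IP polynomial van der
   Waerden theorem: for every finite colouring there are a and a nonempty finite
   H such that the points a + φ(Σ_{n∈H} y_n), φ ∈ P, all have the same colour,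
   and they lie in a finite set chosen before the colouring.  The proof is
   Bergelson-Leibman PET induction in Walters' colour-focusing form: if p ∈ P
   has minimal degree, the maps v ↦ (φ - p)(v + e) - (φ - p)(e) form a family
   of smaller weight (the numbers of classes of leading terms in each degree,
   compared lexicographically from the top degree down), and a focus with as
   many spokes of distinct colours as there are colours forces a monochromatic
   configuration.
   A piecewise syndetic set A yields, on any finite set, a colouring with a
   fixed number of colours in which each colour class is moved into A by a
   single translation; colouring the finite set of the theorem this way, with
   the zero map added to P so that a itself lies in A, gives the result. *)

(** * Maps of finite degree *)

Section FiniteDifferences.
Variables V G : zmodType.
Implicit Types (φ ψ : V -> G) (e : V).

Definition delta e φ : V -> G := fun v => φ (v + e) - φ v.

Fixpoint deg_le d φ : Prop :=
  if d is d'.+1 then forall e, deg_le d' (delta e φ) else forall v, φ v = φ 0.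

Definition finite_degree φ := exists d, deg_le d φ.

Lemma deg_le_cst d (c : G) : deg_le d (fun=> c).
Proof.
elim: d c => [|d IH] c //= e.
by have -> : delta e (fun=> c) = fun=> 0 by apply/funext => v; rewrite /delta subrr.
Qed.

Lemma deg_leD d φ ψ : deg_le d φ -> deg_le d ψ -> deg_le d (φ \+ ψ).
Proof.
elim: d φ ψ => [|d IH] φ ψ /= hφ hψ; first by move=> v; rewrite hφ hψ.
move=> e; have -> : delta e (φ \+ ψ) = delta e φ \+ delta e ψ.
  by apply/funext => v; rewrite /delta /= opprD addrACA.
exact: IH.
Qed.

Lemma deg_leN d φ : deg_le d φ -> deg_le d (\- φ).
Proof.
elim: d φ => [|d IH] φ /= hφ; first by move=> v; rewrite hφ.
move=> e; have -> : delta e (\- φ) = \- delta e φ.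
  by apply/funext => v; rewrite /delta /= opprD.
exact: IH.
Qed.

Lemma deg_leB d φ ψ : deg_le d φ -> deg_le d ψ -> deg_le d (φ \- ψ).
Proof. by move=> hφ /deg_leN hψ; exact: deg_leD hφ hψ. Qed.

Lemma deg_leS d φ : deg_le d φ -> deg_le d.+1 φ.
Proof.
elim: d φ => [|d IH] φ /= hφ e; last exact: IH.
by move=> v; rewrite /delta (hφ (v + e)) (hφ v) (hφ (0 + e)).
Qed.

Lemma deg_le_leq d1 d2 φ : (d1 <= d2)%N -> deg_le d1 φ -> deg_le d2 φ.
Proof. by move/subnK <-; elim: (d2 - d1)%N => // k IH /IH /deg_leS. Qed.

Lemma deg_le_translate d e φ : deg_le d φ -> deg_le d (fun v => φ (v + e)).
Proof.
elim: d φ => [|d IH] φ /= hφ; first by move=> v; rewrite hφ [φ (0 + e)]hφ.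
move=> e'; have -> : delta e' (fun v => φ (v + e)) = fun v => delta e' φ (v + e).
  by apply/funext => v; rewrite /delta addrAC.
exact: IH.
Qed.

Lemma finite_degree_cst (c : G) : finite_degree (fun=> c).
Proof. by exists 0%N; exact: deg_le_cst. Qed.

Lemma finite_degreeD φ ψ : finite_degree φ -> finite_degree ψ -> finite_degree (φ \+ ψ).
Proof.
move=> [d1 h1] [d2 h2]; exists (maxn d1 d2).
by apply: deg_leD; [exact: deg_le_leq (leq_maxl _ _) h1 | exact: deg_le_leq (leq_maxr _ _) h2].
Qed.

Lemma finite_degree_sum (I : Type) (s : seq I) (F : I -> V -> G) :
  (forall i, finite_degree (F i)) -> finite_degree (fun v => \sum_(i <- s) F i v).
Proof.
move=> hF; elim: s => [|i s IH].
  by under eq_fun do rewrite big_nil; exact: finite_degree_cst.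
by under eq_fun do rewrite big_cons; exact: finite_degreeD.
Qed.

Lemma finite_degree_seq (P : seq (V -> G)) :
  {in P, forall φ, finite_degree φ} -> exists D, {in P, forall φ, deg_le D φ}.
Proof.
elim: P => [|φ P IH] hP; first by exists 0%N.
have [d1 h1] := hP φ (mem_head _ _).
have [d2 h2] := IH (fun ψ hψ => hP ψ (@mem_behead _ (φ :: P) ψ hψ)).
exists (maxn d1 d2) => ψ; rewrite inE => /predU1P [-> | /h2].
  exact: deg_le_leq (leq_maxl _ _) h1.
exact: deg_le_leq (leq_maxr _ _).
Qed.

End FiniteDifferences.
Arguments deg_le_cst {V G}.

Section FiniteDifferencesRing.
Variables (V : zmodType) (R : pzRingType).
Implicit Types (φ ψ : V -> R).

Lemma deg_leMl d (c : R) ψ : deg_le d ψ -> deg_le d (fun v => c * ψ v).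
Proof.
elim: d ψ => [|d IH] ψ /= hψ; first by move=> v; rewrite hψ.
move=> e; have -> : delta e (fun v => c * ψ v) = fun v => c * delta e ψ v.
  by apply/funext => v; rewrite /delta mulrBr.
exact: IH.
Qed.

Lemma deg_leMr d (c : R) φ : deg_le d φ -> deg_le d (fun v => φ v * c).
Proof.
elim: d φ => [|d IH] φ /= hφ; first by move=> v; rewrite hφ.
move=> e; have -> : delta e (fun v => φ v * c) = fun v => delta e φ v * c.
  by apply/funext => v; rewrite /delta mulrBl.
exact: IH.
Qed.

Lemma deg_leM d1 d2 φ ψ : deg_le d1 φ -> deg_le d2 ψ -> deg_le (d1 + d2) (φ \* ψ).
Proof.
elim: d1 d2 φ ψ => [|d1 IH1] d2 φ ψ hφ hψ.
  have -> : φ \* ψ = fun v => φ 0 * ψ v by apply/funext => v /=; rewrite hφ.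
  exact: deg_leMl.
elim: d2 ψ hψ => [|d2 IH2] ψ hψ.
  rewrite addn0.
  have -> : φ \* ψ = fun v => φ v * ψ 0 by apply/funext => v /=; rewrite hψ.
  exact: deg_leMr.
suff step e : deg_le (d1.+1 + d2) (delta e (φ \* ψ)) by rewrite addnS.
have -> : delta e (φ \* ψ) = (delta e φ \* (fun v => ψ (v + e))) \+ (φ \* delta e ψ).
  by apply/funext => v; rewrite /delta /= mulrBl mulrBr addrA subrK.
apply: deg_leD; last exact: IH2.
by rewrite addSnnS; apply: IH1 => //; exact: deg_le_translate.
Qed.

Lemma finite_degreeM φ ψ : finite_degree φ -> finite_degree ψ -> finite_degree (φ \* ψ).
Proof. by move=> [d1 h1] [d2 h2]; exists (d1 + d2)%N; exact: deg_leM. Qed.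

Lemma finite_degree_prod (I : Type) (s : seq I) (F : I -> V -> R) :
  (forall i, finite_degree (F i)) -> finite_degree (fun v => \prod_(i <- s) F i v).
Proof.
move=> hF; elim: s => [|i s IH].
  by under eq_fun do rewrite big_nil; exact: finite_degree_cst.
by under eq_fun do rewrite big_cons; exact: finite_degreeM.
Qed.

Lemma finite_degreeX φ k : finite_degree φ -> finite_degree (fun v => φ v ^+ k).
Proof.
move=> hφ; elim: k => [|k IH].
  by under eq_fun do rewrite expr0; exact: finite_degree_cst.
by under eq_fun do rewrite exprS; exact: finite_degreeM.
Qed.

End FiniteDifferencesRing.

Lemma finite_degree_meval (R : comNzRingType) n (f : {mpoly R[n]}) :
  finite_degree (fun v : {ffun 'I_n -> R} => f.@[v]).
Proof.
under eq_fun do rewrite mevalE.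
apply: finite_degree_sum => m; apply: finite_degreeM; first exact: finite_degree_cst.
apply: finite_degree_prod => i; apply: finite_degreeX.
exists 1%N => e /= v; rewrite /delta !ffunE.
by rewrite addrC addKr add0r subr0.
Qed.

Lemma meval_eq0 (R : comNzRingType) n (f : {mpoly R[n]}) :
  f@_0%MM = 0 -> f.@[fun=> 0] = 0.
Proof.
move=> f0; rewrite mevalE big1_seq // => m _.
have [-> | /eqP m0] := eqVneq m 0%MM; first by rewrite f0 mul0r.
have [i mi] : exists i, m i != 0%N.
  apply/existsP; apply: contra_notT m0 => /existsPn mi0.
  by apply/mnmP => i; rewrite mnm0E; apply/eqP/negbNE/mi0.
by rewrite (bigD1 i) //= expr0n (negbTE mi) mul0r mulr0.
Qed.

(** * Leading-term classes and the PET weight *)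

Section ExactDegree.
Variables V G : zmodType.
Implicit Types (φ ψ χ : V -> G) (P : seq (V -> G)).

Definition exact_deg d φ := deg_le d φ /\ forall d', deg_le d' φ -> (d <= d')%N.

Lemma exact_degP D φ : deg_le D φ -> exists d, exact_deg d φ.
Proof.
move=> hD; have hex : exists d, `[< deg_le d φ >] by exists D; exact/asboolP.
by case: (ex_minnP hex) => d /asboolP hd hmin; exists d; split => // d' /asboolP /hmin.
Qed.

Lemma exact_deg_uniq d1 d2 φ : exact_deg d1 φ -> exact_deg d2 φ -> d1 = d2.
Proof. by move=> [h1 m1] [h2 m2]; apply/eqP; rewrite eqn_leq m1 // m2. Qed.

(* At [d = 0] the condition is vacuous, so all constant maps are equivalent. *)
Definition deg_lt d φ := if d is d'.+1 then deg_le d' φ else True.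

Definition deg_equiv d φ ψ := [/\ deg_le d φ, deg_le d ψ & deg_lt d (φ \- ψ)].

Lemma deg_ltD d φ ψ : deg_lt d φ -> deg_lt d ψ -> deg_lt d (φ \+ ψ).
Proof. by case: d => // d; exact: deg_leD. Qed.

Lemma deg_ltN d φ : deg_lt d φ -> deg_lt d (\- φ).
Proof. by case: d => // d; exact: deg_leN. Qed.

Lemma deg_equiv_refl d φ : deg_le d φ -> deg_equiv d φ φ.
Proof.
move=> hφ; split=> //; case: d hφ => // d _.
have -> : φ \- φ = fun=> 0 by apply/funext => v /=; rewrite subrr.
exact: deg_le_cst.
Qed.

Lemma deg_equiv_sym d φ ψ : deg_equiv d φ ψ -> deg_equiv d ψ φ.
Proof.
case=> hφ hψ /deg_ltN hl; split=> //.
by have <- : \- (φ \- ψ) = ψ \- φ by apply/funext => v /=; rewrite opprB.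
Qed.

Lemma deg_equiv_trans d φ ψ χ : deg_equiv d φ ψ -> deg_equiv d ψ χ -> deg_equiv d φ χ.
Proof.
case=> hφ _ h1 [_ hχ h2]; split=> //.
have <- : (φ \- ψ) \+ (ψ \- χ) = φ \- χ by apply/funext => v /=; rewrite addrA subrK.
exact: deg_ltD.
Qed.

Lemma exact_deg_equiv d φ ψ : exact_deg d φ -> deg_equiv d φ ψ -> exact_deg d ψ.
Proof.
case=> _ hmin [_ hψ hl]; split=> // d' hd'; rewrite leqNgt; apply/negP => lt_d'd.
case: d hmin hψ hl lt_d'd => // d hmin _ hl; rewrite ltnS => le_d'd.
have : deg_le d φ.
  have <- : (φ \- ψ) \+ ψ = φ by apply/funext => v /=; rewrite subrK.
  exact: deg_leD hl (deg_le_leq le_d'd hd').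
by move/hmin; rewrite ltnn.
Qed.

Definition deg_rep d φ : V -> G := choose [pred ψ | `[< deg_equiv d φ ψ >]] φ.

Lemma deg_rep_equiv d φ : deg_le d φ -> deg_equiv d φ (deg_rep d φ).
Proof.
move=> hφ; apply/asboolP; apply: (@chooseP _ [pred ψ | `[< deg_equiv d φ ψ >]]).
exact/asboolP/deg_equiv_refl.
Qed.

Lemma eq_deg_rep d φ ψ : deg_le d φ -> deg_le d ψ ->
  deg_rep d φ = deg_rep d ψ <-> deg_equiv d φ ψ.
Proof.
move=> hφ hψ; split => [eq_rep | hφψ].
  apply: deg_equiv_trans (deg_rep_equiv hφ) _; rewrite eq_rep.
  exact/deg_equiv_sym/deg_rep_equiv.
have same_class : [pred χ | `[< deg_equiv d φ χ >]] =1 [pred χ | `[< deg_equiv d ψ χ >]].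
  move=> χ /=; apply/asboolP/asboolP => h.
    exact: deg_equiv_trans (deg_equiv_sym hφψ) h.
  exact: deg_equiv_trans hφψ h.
rewrite /deg_rep (eq_choose same_class); apply: choose_id; apply/asboolP.
  exact: deg_equiv_sym.
exact: deg_equiv_refl.
Qed.

Definition deg_classes d P : seq (V -> G) :=
  undup [seq deg_rep d φ | φ <- P & `[< exact_deg d φ >]].

Lemma deg_classesP d P κ :
  reflect (exists2 φ, φ \in P & exact_deg d φ /\ κ = deg_rep d φ) (κ \in deg_classes d P).
Proof.
rewrite mem_undup; apply: (iffP mapP) => [[φ] | [φ φP [φd ->]]].
  by rewrite mem_filter => /andP [/asboolP φd φP] ->; exists φ.
by exists φ => //; rewrite mem_filter φP andbT; exact/asboolP.
Qed.

Lemma deg_equivDr d χ φ ψ : deg_le d χ ->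
  deg_equiv d (φ \+ χ) (ψ \+ χ) <-> deg_equiv d φ ψ.
Proof.
move=> hχ; rewrite /deg_equiv; have -> : (φ \+ χ) \- (ψ \+ χ) = φ \- ψ.
  by apply/funext => v /=; rewrite opprD addrACA subrr addr0.
split=> [[hφχ hψχ hl] | [hφ hψ hl]]; split=> //; try exact: deg_leD.
  have <- : (φ \+ χ) \- χ = φ by apply/funext => v /=; rewrite addrK.
  exact: deg_leB.
have <- : (ψ \+ χ) \- χ = ψ by apply/funext => v /=; rewrite addrK.
exact: deg_leB.
Qed.

Lemma deg_equivBr d d' φ ψ : deg_le d φ -> deg_le d' ψ -> (d' < d)%N ->
  deg_equiv d φ (φ \- ψ).
Proof.
move=> hφ hψ lt_d'd; have hψd : deg_le d ψ := deg_le_leq (ltnW lt_d'd) hψ.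
split=> //; first exact: deg_leB.
have -> : φ \- (φ \- ψ) = ψ by apply/funext => v /=; rewrite opprB addrC subrK.
by case: d lt_d'd {hφ hψd} => // d; rewrite ltnS => /deg_le_leq; apply.
Qed.

Lemma not_deg_equiv d φ ψ : exact_deg d (φ \- ψ) -> φ 0 = ψ 0 -> φ != ψ ->
  ~ deg_equiv d φ ψ.
Proof.
move=> [hφψ hmin] eq0 /eqP neq [_ _]; case: d hφψ hmin => [|d] hφψ hmin /=.
  move=> _; apply: neq; apply/funext => v; apply/eqP; rewrite -subr_eq0.
  by have /= -> := hφψ v; rewrite eq0 subrr.
by move/hmin; rewrite ltnn.
Qed.

Lemma deg_classes_rep d P κ : κ \in deg_classes d P ->
  deg_le d κ /\ deg_rep d κ = κ.
Proof.
case/deg_classesP => φ _ [[hφ _] ->]; have [_ hrep _] := deg_rep_equiv hφ.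
by split=> //; apply/eq_deg_rep => //; apply/deg_equiv_sym/deg_rep_equiv.
Qed.

Lemma min_exact_deg D P φ1 : φ1 \in P -> {in P, forall φ, deg_le D φ} ->
  exists d0, exists2 p, p \in P &
    exact_deg d0 p /\ {in P, forall φ d, exact_deg d φ -> (d0 <= d)%N}.
Proof.
move=> φ1P P_deg.
have hex : exists d, `[< exists2 φ, φ \in P & exact_deg d φ >].
  have [d hd] := exact_degP (P_deg φ1 φ1P).
  by exists d; apply/asboolP; exists φ1.
case: (ex_minnP hex) => d0 /asboolP [p pP p_deg] p_min; exists d0, p => //.
by split=> // φ φP d hφ; apply: p_min; apply/asboolP; exists φ.
Qed.

Definition weight D P := mkseq (fun i => size (deg_classes (D - i) P)) D.+1.

End ExactDegree.

Section LexOrder.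
Local Open Scope nat_scope.

Fixpoint lexlt (s t : seq nat) : bool :=
  match s, t with
  | a :: s', b :: t' => (a < b) || (a == b) && lexlt s' t'
  | _, _ => false
  end.

Lemma lexlt_mkseq n (f g : nat -> nat) i0 : i0 < n -> f i0 < g i0 ->
  (forall i, i < i0 -> f i = g i) -> lexlt (mkseq f n) (mkseq g n).
Proof.
have mkseqS' (h : nat -> nat) k : mkseq h k.+1 = h 0 :: mkseq (fun i => h i.+1) k.
  rewrite /mkseq /=; have -> : iota 1 k = map succn (iota 0 k) by rewrite -(iotaDl 1 0).
  by rewrite -map_comp.
elim: n f g i0 => // n IH f g [|i0] lt_i0 lt_fg eq_fg.
  by rewrite (mkseqS' f) (mkseqS' g) /= lt_fg.
rewrite (mkseqS' f) (mkseqS' g) /= eq_fg // ltnn eqxx (IH _ _ i0) //.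
by move=> i lt_i; apply: eq_fg.
Qed.


Lemma lexlt_wf n : well_founded (fun s t => size s = n /\ lexlt s t).
Proof.
suff acc s : size s = n -> Acc (fun s t => size s = n /\ lexlt s t) s.
  by move=> s; constructor => t [/acc].
elim: n s => [|n IH] s.
  move/size0nil ->; constructor => -[|b t] [_ lt_t]; discriminate.
case: s => [|a s] size_s; first discriminate.
case: size_s => size_s.
elim/ltn_ind: a s size_s => a IHa s size_s.
have acc_s := IH s size_s; elim: acc_s size_s => {}s _ IHs size_s.
constructor => -[|b t] [size_bt]; first discriminate.
move: size_bt => [size_t] /orP [lt_ba | /andP [/eqP -> lt_ts]].
  exact: IHa.
exact: IHs.
Qed.

End LexOrder.

(** * The PET step *)

Section Recenter.
Variables V G : zmodType.
Implicit Types (φ ψ : V -> G).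

Definition recenter (e : V) φ : V -> G := fun v => φ (v + e) - φ e.

Lemma recenterB e φ ψ : recenter e (φ \- ψ) = recenter e φ \- recenter e ψ.
Proof. by apply/funext => v; rewrite /recenter /= !opprD !opprK addrACA. Qed.

Lemma recenter0 e φ : recenter e φ 0 = 0.
Proof. by rewrite /recenter add0r subrr. Qed.

Lemma deg_le_recenter d e φ : deg_le d φ -> deg_le d (recenter e φ).
Proof.
move=> hφ; apply: (deg_leB (φ := fun v => φ (v + e)) (ψ := fun=> φ e)).
  exact: deg_le_translate.
exact: deg_le_cst.
Qed.

Lemma deg_equiv_recenter d e φ : deg_le d φ -> deg_equiv d φ (recenter e φ).
Proof.
move=> hφ; split=> //; first exact: deg_le_recenter.
case: d hφ => //= d hφ.
have -> : φ \- recenter e φ = (fun=> φ e) \- delta e φ.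
  by apply/funext => v; rewrite /recenter /delta /= !opprB addrCA.
exact: deg_leB (deg_le_cst _ _) (hφ e).
Qed.

Definition pet_family (p : V -> G) (Q : seq (V -> G)) (E : seq V) : seq (V -> G) :=
  [seq recenter e (φ \- p) | φ <- Q, e <- E].

End Recenter.

Section PETStep.
Variables (V G : zmodType) (D d0 : nat) (P : seq (V -> G)) (p : V -> G) (E : seq V).
Hypothesis P_deg : {in P, forall φ, deg_le D φ}.
Hypothesis P0 : {in P, forall φ, φ 0 = 0}.
Hypothesis pP : p \in P.
Hypothesis p_deg : exact_deg d0 p.
Hypothesis p_min : {in P, forall φ d, exact_deg d φ -> (d0 <= d)%N}.
Hypothesis E0 : 0 \in E.

Let Q := [seq φ <- P | φ != p].
Let P' := pet_family p Q E.

Lemma pet_family_deg ψ : ψ \in P' -> deg_le D ψ /\ ψ 0 = 0.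
Proof.
case/allpairsP => -[φ e] [/= φQ _ ->]; split; last exact: recenter0.
move: φQ; rewrite mem_filter => /andP [_ φP].
by apply/deg_le_recenter/deg_leB; apply: P_deg.
Qed.

Lemma pet_equiv_high d e φ : deg_le d φ -> (d0 < d)%N ->
  deg_equiv d φ (recenter e (φ \- p)).
Proof.
move=> hφ lt_d0d; rewrite recenterB.
apply: deg_equiv_trans (deg_equiv_recenter e hφ) _.
exact: deg_equivBr (deg_le_recenter e hφ) (deg_le_recenter e p_deg.1) lt_d0d.
Qed.

Lemma pet_cases ψ : ψ \in P' -> exists φ e dφ,
  [/\ φ \in P, φ != p, ψ = recenter e (φ \- p), exact_deg dφ φ & (d0 <= dφ)%N].
Proof.
case/allpairsP => -[φ e] [/= + _ ->]; rewrite mem_filter => /andP [φp φP].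
have [dφ hφ] := exact_degP (P_deg φP).
by exists φ, e, dφ; split=> //; exact: p_min hφ.
Qed.

Lemma pet_high d ψ : ψ \in P' -> exact_deg d ψ -> (d0 < d)%N ->
  exists2 φ, φ \in P & exact_deg d φ /\ deg_equiv d φ ψ.
Proof.
move=> /pet_cases [φ [e [dφ [φP _ -> hφ le_d0dφ]]]] hψ lt_d0d.
case: (ltngtP d0 dφ) le_d0dφ => // [lt_d0dφ | eq_d0dφ] _.
  have hφψ := pet_equiv_high e hφ.1 lt_d0dφ.
  by rewrite (exact_deg_uniq hψ (exact_deg_equiv hφ hφψ)); exists φ.
have hψd0 : deg_le d0 (recenter e (φ \- p)).
  by apply/deg_le_recenter/deg_leB; [rewrite eq_d0dφ; exact: hφ.1 | exact: p_deg.1].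
by have := hψ.2 _ hψd0; rewrite leqNgt lt_d0d.
Qed.

Lemma pet_low ψ : ψ \in P' -> exact_deg d0 ψ -> exists2 φ, φ \in P &
  [/\ φ != p, exact_deg d0 φ, exact_deg d0 (φ \- p) & deg_equiv d0 (φ \- p) ψ].
Proof.
move=> /pet_cases [φ [e [dφ [φP φp -> hφ le_d0dφ]]]] hψ.
case: (ltngtP d0 dφ) le_d0dφ => // [lt_d0dφ | eq_d0dφ] _.
  have := exact_deg_equiv hφ (pet_equiv_high e hφ.1 lt_d0dφ).
  by move/(exact_deg_uniq hψ) => eq_d0dφ; rewrite eq_d0dφ ltnn in lt_d0dφ.
rewrite -eq_d0dφ in hφ.
have hφp := deg_equiv_recenter e (deg_leB hφ.1 p_deg.1).
exists φ => //; split=> //.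
exact: exact_deg_equiv hψ (deg_equiv_sym hφp).
Qed.

Lemma pet_classes_high d : (d0 < d)%N ->
  size (deg_classes d P') = size (deg_classes d P).
Proof.
move=> lt_d0d; apply/perm_size/uniq_perm; rewrite ?undup_uniq // => κ.
apply/deg_classesP/deg_classesP => [[ψ ψP' [hψ ->]] | [φ φP [hφ ->]]].
  have [φ φP [hφ hφψ]] := pet_high ψP' hψ lt_d0d.
  by exists φ => //; split=> //; apply/esym/eq_deg_rep => //; [exact: hφ.1 | case: hφψ].
have φp : φ != p.
  apply/eqP => eq_φp; move: hφ; rewrite eq_φp => /(exact_deg_uniq p_deg) eq_d.
  by rewrite eq_d ltnn in lt_d0d.
have hφψ := pet_equiv_high 0 hφ.1 lt_d0d.
exists (recenter 0 (φ \- p)); first by apply: allpairs_f => //; rewrite mem_filter φp.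
split; first exact: exact_deg_equiv hφ hφψ.
by apply/eq_deg_rep => //; [exact: hφ.1 | case: hφψ].
Qed.

Lemma pet_lift κ : κ \in deg_classes d0 P' -> exists2 φ, φ \in P &
  [/\ exact_deg d0 φ, deg_rep d0 (κ \+ p) = deg_rep d0 φ & deg_rep d0 φ != deg_rep d0 p].
Proof.
case/deg_classesP => ψ ψP' [hψ ->]; have [_ hrep _] := deg_rep_equiv hψ.1.
have [φ φP [φp hφ hφp hφpψ]] := pet_low ψP' hψ.
exists φ => //; split=> //.
  have <- : (φ \- p) \+ p = φ by apply/funext => v /=; rewrite subrK.
  apply/eq_deg_rep; [exact: deg_leD hrep p_deg.1 | exact: deg_leD hφp.1 p_deg.1 |].
  apply/(deg_equivDr _ _ p_deg.1)/deg_equiv_sym.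
  exact: deg_equiv_trans hφpψ (deg_rep_equiv hψ.1).
apply/eqP => /(eq_deg_rep hφ.1 p_deg.1); apply: not_deg_equiv => //.
by rewrite !P0.
Qed.

Lemma pet_classes_low : (size (deg_classes d0 P') < size (deg_classes d0 P))%N.
Proof.
pose lift κ := deg_rep d0 (κ \+ p).
have lift_inj : {in deg_classes d0 P' &, injective lift}.
  move=> κ1 κ2 /deg_classes_rep [h1 eq1] /deg_classes_rep [h2 eq2] eq_lift.
  rewrite -eq1 -eq2; apply/eq_deg_rep => //; apply/(deg_equivDr _ _ p_deg.1).
  by apply/eq_deg_rep => //; exact: deg_leD p_deg.1.
have lift_sub : {subset map lift (deg_classes d0 P') <= rem (deg_rep d0 p) (deg_classes d0 P)}.
  move=> _ /mapP [κ /pet_lift [φ φP [hφ lift_κ φp]] ->]; rewrite /lift lift_κ.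
  by rewrite mem_rem_uniq ?undup_uniq // inE φp; apply/deg_classesP; exists φ.
have lift_uniq : uniq (map lift (deg_classes d0 P')) by rewrite map_inj_in_uniq ?undup_uniq.
have pK : deg_rep d0 p \in deg_classes d0 P by apply/deg_classesP; exists p.
have := uniq_leq_size lift_uniq lift_sub; rewrite size_map size_rem //.
by move/leq_ltn_trans; apply; rewrite ltn_predL; case: (deg_classes d0 P) pK.
Qed.

Lemma weight_pet_lt : lexlt (weight D P') (weight D P).
Proof.
have le_d0D : (d0 <= D)%N := p_deg.2 _ (P_deg pP).
apply: (lexlt_mkseq (i0 := D - d0)); first by rewrite ltnS leq_subr.
  by rewrite subKn //; exact: pet_classes_low.
move=> i lt_i; apply: pet_classes_high.
by rewrite ltn_subRL addnC -ltn_subRL.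
Qed.

End PETStep.

(** * IP configurations and colour focusing *)

Fixpoint subseqs (T : Type) (s : seq T) : seq (seq T) :=
  if s is x :: s' then subseqs s' ++ map (cons x) (subseqs s') else [:: [::]].

Lemma filter_subseqs (T : eqType) (a : pred T) s : filter a s \in subseqs s.
Proof.
elim: s => [|x s IH] //=; rewrite mem_cat.
by case: (a x); rewrite ?(map_f _ IH) ?IH ?orbT.
Qed.

Lemma subseqs_subseq (T : eqType) (s t : seq T) : t \in subseqs s -> subseq t s.
Proof.
elim: s t => [|x s IH] t /=; first by rewrite inE => /eqP ->.
rewrite mem_cat => /orP [/IH t_s | /mapP [u /IH u_s ->]].
  exact: subseq_trans t_s (subseq_cons s x).
by rewrite /= eqxx.
Qed.

Section Configurations.
Variables (V G : zmodType) (y : nat -> V).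

Definition ysum (H : seq nat) : V := \sum_(n <- H) y n.

Lemma ysum_cat D H : ysum (D ++ H) = ysum D + ysum H.
Proof. exact: big_cat. Qed.

Definition in_window m n (H : seq nat) := uniq H /\ {subset H <= iota m n}.

Lemma in_windowW m n1 n2 H : (n1 <= n2)%N -> in_window m n1 H -> in_window m n2 H.
Proof.
by move=> /subnKC <- [uH sH]; split=> // k /sH; rewrite iotaD mem_cat => ->.
Qed.

Lemma in_windowWl m n1 n2 H : in_window (m + n1)%N n2 H -> in_window m (n1 + n2)%N H.
Proof. by case=> uH sH; split=> // k /sH; rewrite iotaD mem_cat => ->; rewrite orbT. Qed.

Lemma in_window_cat m n1 n2 D H :
  in_window m n1 D -> in_window (m + n1)%N n2 H -> in_window m (n1 + n2)%N (D ++ H).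
Proof.
move=> [uD sD] [uH sH]; split; last first.
  by move=> k; rewrite iotaD !mem_cat => /orP [/sD -> | /sH ->]; rewrite ?orbT.
rewrite cat_uniq uD uH andbT /=; apply/hasPn => k /sH; rewrite mem_iota => /andP [le_k _].
by apply/negP => /sD; rewrite mem_iota ltnNge le_k andbF.
Qed.

Definition window_sums m n := [seq ysum D | D <- subseqs (iota m n)].

Lemma window_sumsP m n s :
  s \in window_sums m n <-> exists2 D, in_window m n D & s = ysum D.
Proof.
split=> [/mapP [D /subseqs_subseq D_sub ->] | [D [uD sD] ->]].
  by exists D => //; split; [exact: subseq_uniq D_sub (iota_uniq _ _) | exact: mem_subseq].
apply/mapP; exists [seq k <- iota m n | k \in D]; first exact: filter_subseqs.
apply: perm_big; apply: uniq_perm => //; first by rewrite filter_uniq ?iota_uniq.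
move=> k; rewrite mem_filter; case: (boolP (k \in D)) => [kD | _] //.
by rewrite (sD k kD).
Qed.

Lemma window_sums0 m n : 0 \in window_sums m n.
Proof. by apply/window_sumsP; exists [::]; [split | rewrite /ysum big_nil]. Qed.

Definition sumset (F1 F2 : seq G) := [seq f + w | f <- F1, w <- F2].

Definition mono_config (T : Type) (P : seq (V -> G)) (c : G -> T) (F : seq G) m n :=
  exists a H, [/\ a \in F, H != [::], in_window m n H &
    exists t, {in P, forall φ, a + φ (ysum H) \in F /\ c (a + φ (ysum H)) = t}].

(* The finite set F is fixed before the colouring; this is what lets the
   theorem be tested against a piecewise syndetic set. *)
Definition ip_vdw (P : seq (V -> G)) :=
  forall (T : finType) m, exists n F, forall c : G -> T, mono_config P c F m n.

Lemma mono_config_sub (T : Type) P P' (c : G -> T) F F' m n :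
  {subset P' <= P} -> {subset F <= F'} -> mono_config P c F m n -> mono_config P' c F' m n.
Proof.
move=> sP sF [a [H [aF Hne Hwin [t Ht]]]]; exists a, H; split=> //; first exact: sF.
by exists t => φ /sP /Ht [? ?]; split=> //; exact: sF.
Qed.

Lemma ip_vdw_sub P P' : {subset P' <= P} -> ip_vdw P -> ip_vdw P'.
Proof.
move=> sP vdw T m; have [n [F HF]] := vdw T m.
by exists n, F => c; exact: mono_config_sub (HF c).
Qed.

Lemma mono_config_translate (T : Type) P (c : G -> T) F0 F z m n n' : (n <= n')%N ->
  {in F0, forall g, g + z \in F} ->
  mono_config P (fun g => c (g + z)) F0 m n -> mono_config P c F m n'.
Proof.
move=> le_nn' F0z [a [H [aF Hne Hwin [t Ht]]]]; exists (a + z), H; split=> //.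
- exact: F0z.
- exact: in_windowW Hwin.
by exists t => φ /Ht [aφF <-]; rewrite addrAC; split=> //; exact: F0z.
Qed.

Lemma ip_vdw_nil : ip_vdw [::].
Proof.
move=> T m; exists 1%N, [:: 0] => c; exists 0, [:: m].
by split; [exact: mem_head | by [] | by split | exists (c 0)].
Qed.

End Configurations.

Section Focusing.
Variables (V G : zmodType) (y : nat -> V) (T : finType) (p : V -> G) (Q : seq (V -> G)).
Hypothesis p0 : p 0 = 0.
Hypothesis Q0 : {in Q, forall φ, φ 0 = 0}.
Hypothesis pet_vdw : forall E, 0 \in E -> ip_vdw y (pet_family p Q E).

Local Notation ysum := (ysum y).
Local Notation window_sums := (window_sums y).
Local Notation mono_config := (mono_config y).

Definition p_shifts (F : seq G) m n := [seq g - p s | g <- F, s <- window_sums m n].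

Lemma p_shiftsP F m n g D : g \in F -> in_window m n D -> g - p (ysum D) \in p_shifts F m n.
Proof. by move=> gF DW; apply: allpairs_f => //; apply/window_sumsP; exists D. Qed.

Lemma p_shifts_id F m n g : g \in F -> g \in p_shifts F m n.
Proof.
move=> gF; have := allpairs_f (fun g s => g - p s) gF (window_sums0 y m n).
by rewrite p0 subr0.
Qed.

(* Together with the focus b, a spoke D is the
   configuration {a + φ(y_D) | φ ∈ p :: Q} with a = b - p(y_D); a focused
   colouring has k spokes, each monochromatic apart from the focus, in k
   distinct colours. *)
Definition spoke (c : G -> T) (F : seq G) m n (b : G) (D : seq nat) (t : T) :=
  [/\ D != [::], in_window m n D &
    {in Q, forall φ, b + (φ \- p) (ysum D) \in F /\ c (b + (φ \- p) (ysum D)) = t}].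

Definition focused (c : G -> T) (F : seq G) m n k :=
  exists b (S : seq (seq nat * T)), [/\ b \in F, size S = k, uniq (unzip2 S) &
    forall D t, (D, t) \in S -> spoke c F m n b D t].

Definition focusing_claim k := forall m, exists n F, forall c : G -> T,
  mono_config (p :: Q) c F m n \/ focused c F m n k.

Lemma spoke_mono c F m n b D : b \in F -> spoke c F m n b D (c b) ->
  mono_config (p :: Q) c (p_shifts F m n) m n.
Proof.
move=> bF [Dne Dwin Dcol]; exists (b - p (ysum D)), D; split=> //.
  exact: p_shiftsP.
exists (c b) => φ; rewrite inE => /predU1P [-> | φQ].
  by rewrite subrK; split=> //; exact: p_shifts_id.
have [bφF bφc] := Dcol φ φQ.
by rewrite addrAC -addrA; split=> //; exact: p_shifts_id.
Qed.

Lemma focusing_claim0 : focusing_claim 0.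
Proof. by move=> m; exists m, [:: 0] => c; right; exists 0, [::]; split; rewrite ?mem_head. Qed.

Lemma focused_extend c F1 F2 m n1 n2 x z H b S :
  x \in F2 -> H != [::] -> in_window (m + n1)%N n2 H ->
  {in pet_family p Q (window_sums m n1), forall ψ, x + ψ (ysum H) \in F2 /\
     {in F1, forall g, c (g + (x + ψ (ysum H))) = c (g + z)}} ->
  b \in F1 -> uniq (unzip2 S) -> c (b + z) \notin unzip2 S ->
  (forall D t, (D, t) \in S -> spoke (fun g => c (g + z)) F1 m n1 b D t) ->
  focused c (p_shifts (sumset F1 F2) m (n1 + n2)%N) m (n1 + n2)%N (size S).+1.
Proof.
move=> xF2 Hne Hwin xH bF1 uS fresh spokes.
have sumF g w : g \in F1 -> w \in F2 -> g + w \in p_shifts (sumset F1 F2) m (n1 + n2)%N.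
  by move=> gF1 wF2; apply/p_shifts_id/allpairs_f.
have petP φ e : φ \in Q -> e \in window_sums m n1 ->
    recenter e (φ \- p) \in pet_family p Q (window_sums m n1).
  by move=> φQ eW; apply: allpairs_f.
have shift_id (δ : V -> G) e v : b + x + δ (e + v) = (b + δ e) + (x + recenter e δ v).
  by rewrite /recenter [e + v]addrC addrACA [δ e + _]addrCA subrr addr0.
exists (b + x), ([seq (D ++ H, t) | '(D, t) <- S] ++ [:: (H, c (b + z))]); split.
- exact: sumF.
- by rewrite size_cat size_map addn1.
- have -> : unzip2 ([seq (D ++ H, t) | '(D, t) <- S] ++ [:: (H, c (b + z))]) =
            rcons (unzip2 S) (c (b + z)).
    by rewrite /unzip2 map_cat -map_comp cats1; congr rcons; apply: eq_map => -[].
  by rewrite rcons_uniq fresh.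
move=> D' t'; rewrite mem_cat mem_seq1 => /orP [/mapP [[D t] DS [-> ->]] | /eqP [-> ->]].
  have [Dne Dwin Dcol] := spokes D t DS; split.
  - by case: (D) Dne.
  - exact: in_window_cat Dwin Hwin.
  move=> φ φQ; have [bDF1 bDc] := Dcol φ φQ.
  have DW : ysum D \in window_sums m n1 by apply/window_sumsP; exists D.
  have [xψF2 xψc] := xH _ (petP φ _ φQ DW).
  rewrite ysum_cat shift_id.
  by split; [exact: sumF | rewrite xψc].
split=> //; first exact: in_windowWl.
move=> φ φQ; have [xψF2 xψc] := xH _ (petP φ _ φQ (window_sums0 y m n1)).
have δ0 : (φ \- p) 0 = 0 by rewrite /= (Q0 φQ) p0 subrr.
have -> : (φ \- p) (ysum H) = recenter 0 (φ \- p) (ysum H).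
  by rewrite /recenter addr0 δ0 subr0.
by rewrite -addrA; split; [exact: sumF | rewrite xψc].
Qed.

Lemma eq_colours (c : G -> T) F u w :
  [ffun i : 'I_(size F) => c (nth 0 F i + u)] = [ffun i : 'I_(size F) => c (nth 0 F i + w)] ->
  {in F, forall g, c (g + u) = c (g + w)}.
Proof.
move=> eq_uw g gF; have ltg : (index g F < size F)%N by rewrite index_mem.
have := congr1 (fun f : {ffun 'I_(size F) -> T} => f (Ordinal ltg)) eq_uw.
by rewrite !ffunE /= nth_index.
Qed.

Lemma p_shifts_translate F1 F2 m n1 n2 z : z \in F2 ->
  {in p_shifts F1 m n1, forall g, g + z \in p_shifts (sumset F1 F2) m (n1 + n2)%N}.
Proof.
move=> zF2 _ /allpairsP [[f s] [/= fF1 /window_sumsP [D Dwin ->] ->]].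
rewrite addrAC; apply: p_shiftsP; first exact: allpairs_f.
exact: in_windowW (leq_addr _ _) Dwin.
Qed.

Lemma focusing_claimS k : focusing_claim k -> focusing_claim k.+1.
Proof.
move=> claim_k m; have [n1 [F1 HF1]] := claim_k m.
set P' := pet_family p Q (window_sums m n1).
have [n2 [F2 HF2]] := pet_vdw (window_sums0 y m n1) {ffun 'I_(size F1) -> T} (m + n1)%N.
exists (n1 + n2)%N, (p_shifts (sumset F1 F2) m (n1 + n2)%N) => c.
have [x [H [xF2 Hne Hwin [t xH]]]] := HF2 (fun x => [ffun i : 'I_(size F1) => c (nth 0 F1 i + x)]).
have [z zF2 zcol] : exists2 z, z \in F2 & {in P', forall ψ, x + ψ (ysum H) \in F2 /\
    {in F1, forall g, c (g + (x + ψ (ysum H))) = c (g + z)}}.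
  case P'E: P' => [|ψ1 P'1]; first by exists x.
  have ψ1P' : ψ1 \in P' by rewrite P'E mem_head.
  exists (x + ψ1 (ysum H)); first exact: (xH _ ψ1P').1.
  move=> ψ; rewrite -P'E => ψP'; split; first exact: (xH _ ψP').1.
  by apply: eq_colours; rewrite (xH _ ψP').2 (xH _ ψ1P').2.
have [mono | [b [S [bF1 <- uS spokes]]]] := HF1 (fun g => c (g + z)).
  left; apply: mono_config_translate mono; first exact: leq_addr.
  by move=> g gF1; apply/p_shifts_id/allpairs_f.
case: (boolP (c (b + z) \in unzip2 S)) => [/mapP [[D t'] DS /= eq_t] | fresh].
  left; apply: mono_config_translate (leq_addr n2 n1) (p_shifts_translate n2 zF2) _.
  by have := spokes D t' DS; rewrite -eq_t; exact: spoke_mono bF1.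
by right; exact: focused_extend xF2 Hne Hwin zcol bF1 uS fresh spokes.
Qed.

Lemma focusing m : exists n F, forall c : G -> T, mono_config (p :: Q) c F m n.
Proof.
have claim k : focusing_claim k.
  by elim: k => [|k]; [exact: focusing_claim0 | exact: focusing_claimS].
have [n [F HF]] := claim #|T| m; exists n, (p_shifts F m n) => c.
case: (HF c) => [mono | [b [S [bF sizeS uS spokes]]]].
  by apply: mono_config_sub mono => // g; exact: p_shifts_id.
have : c b \in unzip2 S.
  apply: contraT => fresh.
  have := uniq_leq_size (s1 := c b :: unzip2 S) (s2 := enum T) _ (fun t _ => mem_enum T t).
  by rewrite /= fresh uS size_map sizeS -cardE ltnn => /(_ isT).
by case/mapP => -[D t] DS /= eq_t; have := spokes D t DS; rewrite -eq_t; exact: spoke_mono bF.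
Qed.

End Focusing.

Lemma ip_vdw_focusing (V G : zmodType) (y : nat -> V) (p : V -> G) Q :
  p 0 = 0 -> {in Q, forall φ, φ 0 = 0} ->
  (forall E, 0 \in E -> ip_vdw y (pet_family p Q E)) -> ip_vdw y (p :: Q).
Proof. by move=> p0 Q0 pet_vdw T; exact: focusing. Qed.

Theorem ip_vdw_of_deg_le (V G : zmodType) (y : nat -> V) D (P : seq (V -> G)) :
  {in P, forall φ, deg_le D φ} -> {in P, forall φ, φ 0 = 0} -> ip_vdw y P.
Proof.
move: {2}(weight D P) (erefl (weight D P)) => w.
elim/(well_founded_ind (lexlt_wf D.+1)): w P => w IH P wP P_deg P0.
case: P => [|φ1 P1] in wP P_deg P0 *; first exact: ip_vdw_nil.
have [d0 [p pP [p_deg p_min]]] := min_exact_deg (mem_head φ1 P1) P_deg.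
set Q := [seq φ <- φ1 :: P1 | φ != p].
apply: (ip_vdw_sub (P := p :: Q)).
  by move=> φ φP; rewrite inE mem_filter φP andbT; case: eqVneq.
apply: ip_vdw_focusing (P0 _ pP) _ _ => [φ | E E0].
  by rewrite mem_filter => /andP [_ /P0].
apply: (IH (weight D (pet_family p Q E))) => //.
- split; first by rewrite size_mkseq.
  by rewrite -wP; exact: weight_pet_lt P_deg P0 pP p_deg p_min E0.
- by move=> ψ /(pet_family_deg P_deg) [].
- by move=> ψ /(pet_family_deg P_deg) [].
Qed.

(** * Piecewise syndetic sets *)

Section PiecewiseSyndetic.
Variables (G : zmodType) (S A : G -> Prop).
Hypothesis S_add : forall a b, S a -> S b -> S (a + b).
Hypothesis S_diff : forall g, exists a b, [/\ S a, S b & g = a - b].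

Lemma semigroup_translate (F : seq G) : exists2 c, S c & {in F, forall g, S (c + g)}.
Proof.
elim: F => [|g F [c Sc cF]].
  by have [a [b [Sa _ _]]] := S_diff 0; exists a.
have [a [b [Sa Sb ->]]] := S_diff g; exists (c + b); first exact: S_add.
move=> h /predU1P [-> | hF]; first by rewrite addrAC -addrA subrK; exact: S_add.
by rewrite addrAC; apply: S_add => //; exact: cF.
Qed.

Lemma piecewise_syndetic_colouring : piecewise_syndetic S A ->
  exists k, forall F : seq G,
    exists (w : 'I_k -> G) (col : G -> 'I_k), {in F, forall g, A (w (col g) + g)}.
Proof.
case=> Gs [_ thick]; exists (size Gs).+1 => F.
have [c0 _ c0F] := semigroup_translate F.
have [x [_ xcov]] : exists x, S x /\ forall s, s \in [seq c0 + g | g <- F] ->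
    exists2 t, t \in Gs & shiftback S A t (s + x).
  by apply: thick => _ /mapP [g gF ->]; exact: c0F.
pose hit g t := `[< A (t + (c0 + g + x)) >].
exists (fun i => nth 0 Gs i + (c0 + x)), (fun g => inord (find (hit g) Gs)) => g gF.
have [t tGs [_ At]] := xcov (c0 + g) (map_f _ gF).
have has_hit : has (hit g) Gs by apply/hasP; exists t => //; exact/asboolP.
rewrite inordK; last by rewrite ltnS ltnW // -has_find.
by have /asboolP := nth_find 0 has_hit; rewrite addrAC addrA.
Qed.

Lemma piecewise_syndetic_ip_vdw (V : zmodType) (y : nat -> V) (P : seq (V -> G)) :
  piecewise_syndetic S A -> ip_vdw y P ->
  exists a H, [/\ H != [::], uniq H, {in H, forall n, 0 < n}%N &
    {in P, forall φ, A (a + φ (ysum y H))}].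
Proof.
move=> /piecewise_syndetic_colouring [k cover] vdw.
have [n [F HF]] := vdw 'I_k 1%N; have [w [col colA]] := cover F.
have [a [H [_ Hne [uH sH] [t Ht]]]] := HF col.
exists (w t + a), H; split=> //.
  by move=> i /sH; rewrite mem_iota => /andP [].
by move=> φ /Ht [aφF <-]; rewrite -addrA; exact: colA.
Qed.

End PiecewiseSyndetic.

Theorem corollary4p2 (G : idomainType) (S : G -> Prop)
  (hS : diff_group_semigroup S)
  (j : nat) (hj : (0 < j)%N)
  (R : seq {mpoly G[j]}) (hRne : R != [::])
  (hR : forall f, f \in R -> is_integral_polynomial f)
  (A : G -> Prop) (hAS : forall a, A a -> S a)
  (hA : piecewise_syndetic S A)
  (y : nat -> 'I_j -> G) (hy : forall n i, S (y n i)) :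
  exists a : G, S a /\
    exists H : seq nat,
      [/\ H != [::], uniq H, (forall n, n \in H -> (0 < n)%N) &
        forall f, f \in R ->
          A (a + f.@[fun i : 'I_j => \sum_(n <- H) y n i])].
Proof.
(* The argument works for any sequence y in G^j. *)
have [S_add S_diff _] := hS.
pose ev (f : {mpoly G[j]}) (v : {ffun 'I_j -> G}) := f.@[v].
pose P := (fun=> 0) :: map ev R.
have [D P_deg] : exists D, {in P, forall φ, deg_le D φ}.
  apply: finite_degree_seq => _ /predU1P [-> | /mapP [f _ ->]].
    exact: finite_degree_cst.
  exact: finite_degree_meval.
have P0 : {in P, forall φ, φ 0 = 0}.
  move=> _ /predU1P [-> // | /mapP [f fR ->]].
  by rewrite /ev -(meval_eq0 (hR f fR)); apply: meval_eq => i; rewrite ffunE.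
have vdw := ip_vdw_of_deg_le (fun n => [ffun i => y n i]) P_deg P0.
have [a [H [Hne uH Hpos HA]]] := piecewise_syndetic_ip_vdw S_add S_diff hA vdw.
exists a; split; first by apply: hAS; have := HA _ (mem_head _ _); rewrite addr0.
exists H; split=> // f fR.
have := HA (ev f) (@mem_behead _ P _ (map_f ev fR)); congr (A (a + _)).
by apply: meval_eq => i; rewrite sum_ffunE; apply: eq_bigr => n _; rewrite ffunE.
Qed.
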